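(* Let $(G,S,T,k,\ell)$ be an instance of \textsc{Token Sliding Optimization} and let $V(G)=H\cup M$ be a partition such that $G[H]$ has maximum degree at most $\Delta$. Let $\sigma$ be a reconfiguration sequence from $S$ to $T$ of length at most $\ell$, let $V(\sigma)$ be the set of vertices touched by $\sigma$, and let $\chi:H\to\{\mathcal{R},\mathcal{B}\}$ be a coloring that is successful for $\sigma$. Let $H_{\mathcal{R}}=\chi^{-1}(\mathcal{R})$. Then $V(\sigma)$ has non-empty intersection with at most $2\ell$ connected components of $G[H_{\mathcal{R}}]$, and each connected component of $G[H_{\mathcal{R}}]$ that intersects $V(\sigma)$ has at most $2\ell$ vertices.
   Context: An instance $(G,S,T,k,\ell)$ of \textsc{Token Sliding Optimization}: $G$ a simple graph, $S,T$ independent sets of size $k$, $\ell\ge1$. A reconfiguration sequence of length $m$ from $S$ to $T$ is a sequence $S=I_0,\dots,I_m=T$ of independent sets of size $k$ with each $I_{j+1}=(I_j\setminus\{u\})\cup\{v\}$ for some $u\in I_j$, $v\notin I_j$, $\{u,v\}\in E(G)$ (a token slides from $u$ to $v$). A vertex is touched by $\sigma$ if at some step a token slides from it to a neighbor or from a neighbor to it. For $Y\subseteq H$, $N_H(Y)=\{v\in H\setminus Y: v\text{ adjacent to some vertex of }Y\}$. The coloring $\chi$ is successful if every vertex of $V(\sigma)\cap H$ is colored $\mathcal{R}$ and every vertex of $N_H(V(\sigma)\cap H)$ is colored $\mathcal{B}$. *)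

From mathcomp Require Import all_boot.
Set Implicit Arguments. Unset Strict Implicit. Unset Printing Implicit Defensive.

Section Defs.
Variable V : finType.
Variable g : rel V.

Definition simple_graph := symmetric g /\ irreflexive g.

Definition independent (I : {set V}) : bool :=
  [forall x in I, forall y in I, ~~ g x y].

Definition slide_step (I J : {set V}) (u v : V) : bool :=
  [&& u \in I, v \notin I, g u v & J == v |: (I :\ u)].

(* s = [:: I_1; ...; I_m] : reconfiguration sequence S = I_0, I_1, ..., I_m = T
   of length m = size s *)
Definition reconf_seq (k : nat) (S T : {set V}) (s : seq {set V}) : bool :=
  [&& all (fun I => independent I && (#|I| == k)) (S :: s),
      all (fun p => [exists u, exists v, slide_step p.1 p.2 u v]) (zip (S :: s) s)
    & last S s == T].

Definition touched (S : {set V}) (s : seq {set V}) : {set V} :=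
  [set x | has (fun p => [exists u, exists v,
              slide_step p.1 p.2 u v && ((x == u) || (x == v))]) (zip (S :: s) s)].

Definition nbhd_in (H Y : {set V}) : {set V} :=
  [set v in H :\: Y | [exists y in Y, g v y]].

(* chi : V -> bool, true = R (red), false = B (blue); only values on H matter *)
Definition successful (H : {set V}) (chi : V -> bool) (Vs : {set V}) : Prop :=
  (forall x, x \in Vs :&: H -> chi x = true) /\
  (forall x, x \in nbhd_in H (Vs :&: H) -> chi x = false).

Definition max_deg_le (H : {set V}) (D : nat) : Prop :=
  forall x, x \in H -> #|[set y in H | g x y]| <= D.

Definition induced (A : {set V}) : rel V := fun x y => [&& x \in A, y \in A & g x y].

Definition component (A : {set V}) (x : V) : {set V} :=
  [set y | connect (induced A) x y].

Definition components (A : {set V}) : {set {set V}} :=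
  [set component A x | x in A].

End Defs.

From mathcomp Require Import all_boot.

(* A red vertex adjacent to a touched red vertex is itself touched: otherwise it
   would lie in N_H(V(sigma) ∩ H) and be blue.  Hence V(sigma) is closed under
   the edges of G[H_R], so every component of G[H_R] meeting V(sigma) is the
   component of one of its vertices and lies inside it.  Both bounds then reduce
   to |V(sigma)| <= 2l, as each of the at most l slides touches two vertices. *)

Set Implicit Arguments. Unset Strict Implicit. Unset Printing Implicit Defensive.

Section Touched.
Variables (V : finType) (g : rel V).

Definition step_touched (I J : {set V}) : {set V} :=
  [set x | [exists u, exists v, slide_step g I J u v && ((x == u) || (x == v))]].

Lemma slide_step_uniq (I J : {set V}) (u v u' v' : V) :
  slide_step g I J u v -> slide_step g I J u' v' -> u = u' /\ v = v'.
Proof.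
move=> /and4P[uI vI _ /eqP defJ] /and4P[_ _ _ /eqP defJ'].
have eq_u : u = u'.
  apply/eqP; apply: contraT => neq_uu'.
  have : u \in J by rewrite defJ' !inE neq_uu' uI orbT.
  by rewrite defJ !inE eqxx orbF => /eqP eq_uv; rewrite -eq_uv uI in vI.
split=> //; have : v \in J by rewrite defJ !inE eqxx.
by rewrite defJ' !inE => /orP[/eqP // | /andP[_ vI']]; rewrite vI' in vI.
Qed.

Lemma card_step_touched (I J : {set V}) : #|step_touched I J| <= 2.
Proof.
have [/existsP[u /existsP[v st]] | no_step] :=
  boolP [exists u, exists v, slide_step g I J u v].
  apply: (@leq_trans #|[set u; v]|); last by rewrite cards2; case: (u != v).
  apply: subset_leq_card; apply/subsetP => x.
  rewrite !inE => /existsP[u' /existsP[v' /andP[st' x_uv']]].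
  by have [<- <-] := slide_step_uniq st' st.
suff -> : step_touched I J = set0 by rewrite cards0.
apply/setP => x; rewrite !inE; apply: contraNF no_step.
by case/existsP=> u /existsP[v /andP[st _]]; apply/existsP; exists u; apply/existsP; exists v.
Qed.

Lemma touchedE (S : {set V}) (s : seq {set V}) :
  touched g S s = \bigcup_(p <- zip (S :: s) s) step_touched p.1 p.2.
Proof.
apply/setP => x; rewrite inE; elim: (zip (S :: s) s) => [|p r IHr].
  by rewrite big_nil inE.
by rewrite big_cons /= in_setU IHr inE.
Qed.

Lemma card_touched (S : {set V}) (s : seq {set V}) : #|touched g S s| <= 2 * size s.
Proof.
have -> : size s = size (zip (S :: s) s) by rewrite size_zip /= (minn_idPr (leqnSn _)).
rewrite touchedE; elim: (zip (S :: s) s) => [|p r IHr]; first by rewrite big_nil cards0.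
rewrite big_cons (leq_trans (leq_card_setU _ _)) //.
by rewrite mulnS leq_add ?card_step_touched.
Qed.

End Touched.

Section ClosedComponents.
Variables (V : finType) (g : rel V) (A X : {set V}).
Hypothesis closedX : closed (induced g A) X.

Lemma component_subset y : y \in X -> component g A y \subset X.
Proof.
by move=> yX; apply/subsetP => z; rewrite inE => /(closed_connect closedX) <-.
Qed.

Lemma components_meeting C :
  C \in components g A -> C :&: X != set0 -> C \in component g A @: X.
Proof.
case/imsetP=> y _ -> /set0Pn[z]; rewrite !inE => /andP[yz zX].
by rewrite imset_f // (closed_connect closedX yz).
Qed.

Lemma card_components_meeting :
  #|[set C in components g A | C :&: X != set0]| <= #|X|.
Proof.
apply: leq_trans (leq_imset_card (component g A) (mem X)).
by apply: subset_leq_card; apply/subsetP => C; rewrite inE => /andP[]; apply: components_meeting.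
Qed.

Lemma card_component_meeting C :
  C \in components g A -> C :&: X != set0 -> #|C| <= #|X|.
Proof.
move=> compC meetC; apply: subset_leq_card.
by have /imsetP[y yX ->] := components_meeting compC meetC; apply: component_subset.
Qed.

End ClosedComponents.

Lemma successful_closed (V : finType) (g : rel V) (H Vs : {set V}) (chi : V -> bool) :
  symmetric g -> successful g H chi Vs -> closed (induced g [set x in H | chi x]) Vs.
Proof.
move=> gsym [_ blue_nbhd].
have red_nbhd a b : a \in Vs -> induced g [set x in H | chi x] a b -> b \in Vs.
  move=> aVs /and3P[]; rewrite !inE => /andP[aH _] /andP[bH chib] gab.
  apply: contraT => bVs; suff : chi b = false by rewrite chib.
  apply: blue_nbhd; rewrite /nbhd_in !inE (negbTE bVs) bH /=.
  by apply/existsP; exists a; rewrite !inE aVs aH gsym.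
move=> a b e_ab; apply/idP/idP => [aVs | bVs]; first exact: red_nbhd e_ab.
by apply: red_nbhd bVs _; rewrite /induced andbCA gsym.
Qed.

Theorem lemma4p1 (V : finType) (g : rel V) (S T : {set V}) (k l : nat)
    (H M : {set V}) (D : nat) (s : seq {set V}) (chi : V -> bool) :
  simple_graph g ->
  independent g S -> independent g T -> #|S| = k -> #|T| = k -> 1 <= l ->
  H :&: M = set0 -> H :|: M = [set: V] ->
  max_deg_le g H D ->
  reconf_seq g k S T s -> size s <= l ->
  successful g H chi (touched g S s) ->
  let HR := [set x in H | chi x] in
  #|[set C in components g HR | C :&: touched g S s != set0]| <= 2 * l /\
  (forall C, C \in components g HR -> C :&: touched g S s != set0 ->
     #|C| <= 2 * l).
Proof.
move=> [gsym _] _ _ _ _ _ _ _ _ _ size_s succ HR.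
have card_Vs : #|touched g S s| <= 2 * l.
  by rewrite (leq_trans (card_touched g S s)) // leq_mul2l size_s orbT.
have closed_Vs := successful_closed gsym succ.
split; first exact: leq_trans (card_components_meeting closed_Vs) card_Vs.
by move=> C compC meetC; apply: leq_trans (card_component_meeting closed_Vs compC meetC) card_Vs.
Qed.
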